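(* Let $(K,\mathcal O,k)$ be a $p$-modular system with $\mathcal O$ complete, let $\pi$ generate the maximal ideal of $\mathcal O$, and let $\Lambda$ be an $\mathcal O$-order in a separable $K$-algebra. Then the canonical map $\operatorname{Out}_{\mathcal O}(\Lambda)\to\operatorname{Out}_{\mathcal O}(\Lambda/\pi^s\Lambda)$ is injective for every $s\geq d(\Lambda\otimes_{\mathcal O}\Lambda^{\mathrm{op}})+1$.
   Context: A $p$-modular system $(K,\mathcal O,k)$ consists of a discrete valuation ring $\mathcal O$ of characteristic zero with fraction field $K$ and residue field $k$ of characteristic $p>0$. An $\mathcal O$-order in a separable $K$-algebra is an $\mathcal O$-algebra, free and finitely generated as an $\mathcal O$-module, whose scalar extension to $K$ is separable. $\operatorname{Out}_{\mathcal O}(A)=\operatorname{Aut}_{\mathcal O}(A)/\operatorname{Inn}(A)$. For such an order $\Gamma$, the depth $d(\Gamma)$ is defined by $\pi^{d(\Gamma)}\mathcal O=I(\Gamma)$, where $I(\Gamma)$ is the (nonzero) ideal of elements of $\mathcal O$ annihilating the Hochschild cohomology $H^1(\Gamma,T)$ for all $\Gamma$-$\Gamma$-bimodules $T$. *)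

From HB Require Import structures.
From mathcomp Require Import all_boot all_order all_algebra.
Set Implicit Arguments. Unset Strict Implicit. Unset Printing Implicit Defensive.
Import Order.TTheory GRing.Theory Num.Theory.
Local Open Scope ring_scope.

Definition is_dvr_unif (O : idomainType) (pi : O) : Prop :=
  pi != 0 /\ pi \isn't a GRing.unit /\
  forall a : O, a != 0 -> exists (u : O) (n : nat), u \is a GRing.unit /\ a = u * pi ^+ n.

Definition char_zero (O : idomainType) : Prop := forall n : nat, (0 < n)%N -> n%:R != 0 :> O.

(* residue field O/pi O has characteristic p (p prime) *)
Definition residue_char (O : idomainType) (pi : O) (p : nat) : Prop :=
  prime p /\ exists y : O, p%:R = pi * y.

Definition pi_complete (O : idomainType) (pi : O) : Prop :=
  forall a : nat -> O, (forall n, exists y, a n.+1 - a n = pi ^+ n * y) ->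
    exists l : O, forall n, exists y, l - a n = pi ^+ n * y.

Definition is_frac_field (O : idomainType) (K : fieldType) (iota : {rmorphism O -> K}) : Prop :=
  injective iota /\ forall k : K, exists a b : O, b != 0 /\ k = iota a / iota b.

Definition scalev (R : pzRingType) (I : finType) (a : R) (x : {ffun I -> R}) : {ffun I -> R} :=
  [ffun k => a * x k].

(* An algebra free on the finite basis I over R is given by structure
   constants c with e_i e_j = \sum_k c i j k e_k; elements are coordinate
   vectors {ffun I -> R}. *)
Definition mulc (R : pzRingType) (I : finType) (c : I -> I -> I -> R)
  (x y : {ffun I -> R}) : {ffun I -> R} :=
  [ffun k => \sum_(i : I) \sum_(j : I) x i * y j * c i j k].

Definition basisv (R : pzRingType) (I : finType) (i : I) : {ffun I -> R} :=
  [ffun k => (k == i)%:R].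

Definition is_assoc_alg (R : pzRingType) (I : finType) (c : I -> I -> I -> R)
  (u : {ffun I -> R}) : Prop :=
  (forall x y z, mulc c (mulc c x y) z = mulc c x (mulc c y z)) /\
  (forall x, mulc c u x = x) /\ (forall x, mulc c x u = x).

(* Separable algebra over a field: existence of a separability idempotent
   e = \sum e(i,j) e_i (x) e_j in A (x) A^op with m(e) = 1 and
   x e = e x for the A-bimodule structure of A (x) A. *)
Definition separable_alg (K : fieldType) (I : finType) (c : I -> I -> I -> K)
  (u : {ffun I -> K}) : Prop :=
  exists e : {ffun I * I -> K},
    (forall k, \sum_(i : I) \sum_(j : I) e (i, j) * c i j k = u k) /\
    (forall (x : {ffun I -> K}) (a b : I),
       \sum_(i : I) e (i, b) * mulc c x (basisv K i) a =
       \sum_(j : I) e (a, j) * mulc c (basisv K j) x b).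

Definition is_order_sep (O : idomainType) (K : fieldType) (iota : {rmorphism O -> K})
  (I : finType) (c : I -> I -> I -> O) (u : {ffun I -> O}) : Prop :=
  is_assoc_alg c u /\
  separable_alg (fun i j k => iota (c i j k)) [ffun i => iota (u i)].

(* Enveloping algebra Lambda (x)_O Lambda^op, basis I * I,
   (e_i (x) e_j)(e_k (x) e_l) = e_i e_k (x) e_l e_j. *)
Definition env_sc (R : pzRingType) (I : finType) (c : I -> I -> I -> R) :
  I * I -> I * I -> I * I -> R :=
  fun ij kl mn => c ij.1 kl.1 mn.1 * c kl.2 ij.2 mn.2.

Definition env_unit (R : pzRingType) (I : finType) (u : {ffun I -> R}) : {ffun I * I -> R} :=
  [ffun ij => u ij.1 * u ij.2].

Definition is_bimod (O : comNzRingType) (J : finType) (g : J -> J -> J -> O)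
  (v : {ffun J -> O}) (T : lmodType O)
  (l r : {ffun J -> O} -> T -> T) : Prop :=
  (forall (a : O) (x y : {ffun J -> O}) (t : T), l (scalev a x + y) t = a *: l x t + l y t) /\
  (forall (a : O) (x : {ffun J -> O}) (t s : T), l x (a *: t + s) = a *: l x t + l x s) /\
  (forall (a : O) (x y : {ffun J -> O}) (t : T), r (scalev a x + y) t = a *: r x t + r y t) /\
  (forall (a : O) (x : {ffun J -> O}) (t s : T), r x (a *: t + s) = a *: r x t + r x s) /\
  (forall x y t, l (mulc g x y) t = l x (l y t)) /\ (forall t, l v t = t) /\
  (forall x y t, r (mulc g x y) t = r y (r x t)) /\ (forall t, r v t = t) /\
  (forall x y t, l x (r y t) = r y (l x t)).

(* O-linear derivations Gamma -> T  (l x t = x.t, r x t = t.x) *)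
Definition is_der (O : comNzRingType) (J : finType) (g : J -> J -> J -> O)
  (T : lmodType O) (l r : {ffun J -> O} -> T -> T) (d : {ffun J -> O} -> T) : Prop :=
  (forall (a : O) (x y : {ffun J -> O}), d (scalev a x + y) = a *: d x + d y) /\
  (forall x y, d (mulc g x y) = l x (d y) + r y (d x)).

(* I(Gamma): elements c of O annihilating H^1(Gamma, T) for every bimodule T,
   i.e. c.delta is an inner derivation for every derivation delta. *)
Definition annH1 (O : comNzRingType) (J : finType) (g : J -> J -> J -> O)
  (v : {ffun J -> O}) (a : O) : Prop :=
  forall (T : lmodType O) (l r : {ffun J -> O} -> T -> T),
    is_bimod g v l r ->
    forall d : {ffun J -> O} -> T, is_der g l r d ->
      exists t : T, forall x, a *: d x = l x t - r x t.

(* d(Gamma) = dd  iff  I(Gamma) = pi^dd O *)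
Definition depth_is (O : comNzRingType) (pi : O) (J : finType) (g : J -> J -> J -> O)
  (v : {ffun J -> O}) (dd : nat) : Prop :=
  forall a : O, annH1 g v a <-> exists y : O, a = pi ^+ dd * y.

Definition is_aut (O : comNzRingType) (I : finType) (c : I -> I -> I -> O)
  (u : {ffun I -> O}) (f : {ffun I -> O} -> {ffun I -> O}) : Prop :=
  (forall (a : O) (x y : {ffun I -> O}), f (scalev a x + y) = scalev a (f x) + f y) /\
  (forall x y, f (mulc c x y) = mulc c (f x) (f y)) /\
  f u = u /\ bijective f.

Definition congr_mod (O : comNzRingType) (I : finType) (q : O) (x y : {ffun I -> O}) : Prop :=
  exists z : {ffun I -> O}, x - y = scalev q z.

From HB Require Import structures.
From mathcomp Require Import all_boot all_order all_algebra.
From mathcomp Require Import ring.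
Import GRing.Theory.
Set Implicit Arguments. Unset Strict Implicit.
Local Open Scope ring_scope.

(* By completeness, a unit w modulo pi^s lifts to a genuine unit, and alpha agrees
   modulo pi^s with gamma = beta o (x |-> w x w^-1).  Then D = (alpha - gamma) / pi^s
   is a derivation of Lambda into Lambda with the bimodule structure x.t.y =
   alpha(x) t gamma(y).  A Lambda-bimodule X turns into the Lambda^e-bimodule
   Hom(Lambda, X), and a derivation into X into a derivation of Lambda^e into it, so
   pi^d also annihilates H^1(Lambda, X): pi^d D(x) = alpha(x) t - t gamma(x).  Hence
   v = 1 - pi^(s-d) t, a unit as s > d, satisfies alpha(x) v = v gamma(x).
   Separability, the residue characteristic and the fraction field are used only
   through the depth hypothesis. *)

Section StructureConstants.
Variables (R : comNzRingType) (I : finType) (c : I -> I -> I -> R).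
Local Notation A := {ffun I -> R}.
Local Notation M := (mulc c).

Lemma mulcDl (x y z : A) : M (x + y) z = M x z + M y z.
Proof.
apply/ffunP=> k; rewrite !ffunE -big_split; apply: eq_bigr => i _.
by rewrite -big_split; apply: eq_bigr => j _; rewrite !ffunE /=; ring.
Qed.

Lemma mulcDr (x y z : A) : M z (x + y) = M z x + M z y.
Proof.
apply/ffunP=> k; rewrite !ffunE -big_split; apply: eq_bigr => i _.
by rewrite -big_split; apply: eq_bigr => j _; rewrite !ffunE /=; ring.
Qed.

Lemma mulcZl a (x z : A) : M (scalev a x) z = scalev a (M x z).
Proof.
apply/ffunP=> k; rewrite !ffunE mulr_sumr; apply: eq_bigr => i _.
by rewrite mulr_sumr; apply: eq_bigr => j _; rewrite !ffunE /=; ring.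
Qed.

Lemma mulcZr a (x z : A) : M z (scalev a x) = scalev a (M z x).
Proof.
apply/ffunP=> k; rewrite !ffunE mulr_sumr; apply: eq_bigr => i _.
by rewrite mulr_sumr; apply: eq_bigr => j _; rewrite !ffunE /=; ring.
Qed.

Lemma mulc_linl a (x y z : A) : M (scalev a x + y) z = scalev a (M x z) + M y z.
Proof. by rewrite mulcDl mulcZl. Qed.

Lemma mulc_linr a (x y z : A) : M z (scalev a x + y) = scalev a (M z x) + M z y.
Proof. by rewrite mulcDr mulcZr. Qed.

Lemma scale0v (x : A) : scalev 0 x = 0.
Proof. by apply/ffunP=> k; rewrite !ffunE mul0r. Qed.

Lemma scale1v (x : A) : scalev 1 x = x.
Proof. by apply/ffunP=> k; rewrite !ffunE mul1r. Qed.

Lemma scaleNv (x : A) : scalev (-1) x = - x.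
Proof. by apply/ffunP=> k; rewrite !ffunE mulN1r. Qed.

Lemma scalevA a b (x : A) : scalev a (scalev b x) = scalev (a * b) x.
Proof. by apply/ffunP=> k; rewrite !ffunE mulrA. Qed.

Lemma scalevDr a (x y : A) : scalev a (x + y) = scalev a x + scalev a y.
Proof. by apply/ffunP=> k; rewrite !ffunE mulrDr. Qed.

Lemma scalevBr a (x y : A) : scalev a (x - y) = scalev a x - scalev a y.
Proof. by apply/ffunP=> k; rewrite !ffunE mulrBr. Qed.

Lemma mulc0l (z : A) : M 0 z = 0.
Proof. by have := mulcZl 0 0 z; rewrite !scale0v. Qed.

Lemma mulc0r (z : A) : M z 0 = 0.
Proof. by have := mulcZr 0 0 z; rewrite !scale0v. Qed.

Lemma mulcNl (x z : A) : M (- x) z = - M x z.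
Proof. by rewrite -scaleNv mulcZl scaleNv. Qed.

Lemma mulcNr (x z : A) : M z (- x) = - M z x.
Proof. by rewrite -scaleNv mulcZr scaleNv. Qed.

Lemma mulcBl (x y z : A) : M (x - y) z = M x z - M y z.
Proof. by rewrite mulcDl mulcNl. Qed.

Lemma mulcBr (x y z : A) : M z (x - y) = M z x - M z y.
Proof. by rewrite mulcDr mulcNr. Qed.

Definition dvdv (q : R) (x : A) := exists z, x = scalev q z.

Lemma dvdvD q x y : dvdv q x -> dvdv q y -> dvdv q (x + y).
Proof. by move=> [z1 ->] [z2 ->]; exists (z1 + z2); rewrite scalevDr. Qed.

Lemma dvdvB q x y : dvdv q x -> dvdv q y -> dvdv q (x - y).
Proof. by move=> [z1 ->] [z2 ->]; exists (z1 - z2); rewrite scalevBr. Qed.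

Lemma dvdv_mulcl q x y : dvdv q x -> dvdv q (M y x).
Proof. by move=> [z ->]; exists (M y z); rewrite mulcZr. Qed.

Lemma dvdv_mulcr q x y : dvdv q x -> dvdv q (M x y).
Proof. by move=> [z ->]; exists (M z y); rewrite mulcZl. Qed.

Lemma dvdv_mulc a b x y : dvdv a x -> dvdv b y -> dvdv (a * b) (M x y).
Proof. by move=> [z1 ->] [z2 ->]; exists (M z1 z2); rewrite mulcZl mulcZr scalevA. Qed.

Lemma dvdv_exp_leq (a : R) m n x : (m <= n)%N -> dvdv (a ^+ n) x -> dvdv (a ^+ m) x.
Proof.
move=> /subnK <- [z ->]; exists (scalev (a ^+ (n - m)) z).
by rewrite scalevA -exprD addnC.
Qed.

Lemma congr_mod_quotient (f g : A -> A) q :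
  (forall x, congr_mod q (f x) (g x)) -> exists D, forall x, f x - g x = scalev q (D x).
Proof.
move=> fg; have fgb x : exists z, f x - g x == scalev q z by have [z /eqP] := fg x; exists z.
by exists (fun x => xchoose (fgb x)) => x; apply/eqP; exact: (xchooseP (fgb x)).
Qed.

Lemma congr_modE q (x y : A) : congr_mod q x y = dvdv q (x - y).
Proof. by []. Qed.

Lemma congr_mod_trans q (x y z : A) : congr_mod q x y -> congr_mod q y z -> congr_mod q x z.
Proof. by rewrite !congr_modE => xy yz; rewrite -[x](subrK y) -addrA; apply: dvdvD. Qed.

End StructureConstants.

Lemma dvr_divisible_all_eq0 (O : idomainType) (pi : O) : is_dvr_unif pi ->
  forall a : O, (forall n, exists y, a = pi ^+ n * y) -> a = 0.
Proof.
move=> [pi0 [piNunit factor]] a a_div; apply/eqP; apply/negPn/negP => a0.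
have [w [n [w_unit a_eq]]] := factor a a0.
have [y] := a_div n.+1; rewrite a_eq.
have pin0 : pi ^+ n != 0 by rewrite expf_neq0.
rewrite exprSr -mulrA mulrC => /(mulfI pin0) w_eq.
by move: w_unit; rewrite w_eq unitrM (negPf piNunit).
Qed.

Section PiAdic.
Variables (O : idomainType) (pi : O) (I : finType) (c : I -> I -> I -> O) (u : {ffun I -> O}).
Hypotheses (dvr_pi : is_dvr_unif pi) (complete_pi : pi_complete pi).
Hypothesis assoc_cu : is_assoc_alg c u.
Local Notation A := {ffun I -> O}.
Local Notation M := (mulc c).

Lemma dvdv_all_eq0 (x : A) : (forall n, dvdv (pi ^+ n) x) -> x = 0.
Proof.
move=> x_div; apply/ffunP => i; rewrite ffunE; apply: (dvr_divisible_all_eq0 dvr_pi) => n.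
by have [z ->] := x_div n; exists (z i); rewrite ffunE.
Qed.

Lemma vec_pi_complete (S : nat -> A) : (forall n, dvdv (pi ^+ n) (S n.+1 - S n)) ->
  exists L, forall n, dvdv (pi ^+ n) (L - S n).
Proof.
move=> cauchy.
have lim i : exists l, forall n, exists y, l - S n i = pi ^+ n * y.
  apply: complete_pi => n; have [z /ffunP/(_ i)] := cauchy n.
  by rewrite !ffunE; exists (z i).
have [L HL] := fin_all_exists lim.
exists [ffun i => L i] => n; have [z hz] := fin_all_exists (fun i => HL i n).
by exists [ffun i => z i]; apply/ffunP => i; rewrite !ffunE hz.
Qed.

(* The inverse of u - q is the pi-adically convergent series of the powers of q. *)
Lemma invertible_unit_sub (q : A) : dvdv pi q ->
  exists L, M (u - q) L = u /\ M L (u - q) = u.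
Proof.
move: assoc_cu => [mulcA [mul1c mulc1]] pi_q.
pose P n := iter n (M q) u.
pose S n := \sum_(k < n) P k.
have P_div n : dvdv (pi ^+ n) (P n).
  elim: n => [|n IH]; first by exists u; rewrite scale1v.
  by rewrite exprS; apply: dvdv_mulc.
have P_comm n : M (P n) q = M q (P n).
  by elim: n => [|n IH]; rewrite /= ?mul1c ?mulc1 // mulcA IH.
have S_succ n : S n.+1 = S n + P n by rewrite /S big_ord_recr.
have S_invl n : M (u - q) (S n) = u - P n.
  elim: n => [|n IH]; first by rewrite /S big_ord0 mulc0r subrr.
  by rewrite S_succ mulcDr IH mulcBl mul1c addrA subrK.
have S_invr n : M (S n) (u - q) = u - P n.
  elim: n => [|n IH]; first by rewrite /S big_ord0 mulc0l subrr.
  by rewrite S_succ mulcDl IH mulcBr mulc1 P_comm addrA subrK.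
have [L HL] : exists L, forall n, dvdv (pi ^+ n) (L - S n).
  by apply: vec_pi_complete => n; rewrite S_succ addrC addKr.
exists L; split; apply/eqP; rewrite -subr_eq0; apply/eqP; apply: dvdv_all_eq0 => n.
  have -> : M (u - q) L - u = M (u - q) (L - S n) - P n.
    by rewrite mulcBr S_invl opprB addrA addrAC addrK.
  by apply: dvdvB; [apply: dvdv_mulcl|].
have -> : M L (u - q) - u = M (L - S n) (u - q) - P n.
  by rewrite mulcBl S_invr opprB addrA addrAC addrK.
by apply: dvdvB; [apply: dvdv_mulcr|].
Qed.

Lemma invertible_congr_unit (x : A) : congr_mod pi x u ->
  exists xi, M x xi = u /\ M xi x = u.
Proof.
move=> x_u; have [|L] := @invertible_unit_sub (u - x).
  by rewrite -opprB; case: x_u => z ->; exists (scalev (-1) z); rewrite -scaleNv !scalevA mulrC.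
by rewrite opprB addrC subrK; exists L.
Qed.

End PiAdic.

Section CoordinateLinearity.
Variables (R : comNzRingType) (I : finType).
Local Notation A := {ffun I -> R}.
Local Notation e := (basisv R).

Definition lmod_linear (V X : lmodType R) (F : V -> X) :=
  forall a x y, F (a *: x + y) = a *: F x + F y.

Definition vec_linear (X : lmodType R) (F : A -> X) :=
  forall a x y, F (scalev a x + y) = a *: F x + F y.

Lemma lmod_linear0 (V X : lmodType R) (F : V -> X) : lmod_linear F -> F 0 = 0.
Proof.
move=> F_lin; have := F_lin 1 0 0; rewrite !scale1r addr0 => F00.
by apply: (@addrI _ (F 0)); rewrite addr0 -F00.
Qed.

Lemma lmod_linearD (V X : lmodType R) (F : V -> X) : lmod_linear F ->
  forall x y, F (x + y) = F x + F y.
Proof. by move=> F_lin x y; have := F_lin 1 x y; rewrite !scale1r. Qed.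

Lemma lmod_linear_sum (V X : lmodType R) (F : V -> X) : lmod_linear F ->
  forall (J : Type) (r : seq J) (a : J -> R) (v : J -> V),
  F (\sum_(j <- r) a j *: v j) = \sum_(j <- r) a j *: F (v j).
Proof.
move=> F_lin J r a v; apply: (big_rec2 (fun s1 s2 => F s1 = s2)).
  exact: lmod_linear0.
by move=> j y1 y2 _ <-; rewrite F_lin.
Qed.

Lemma vec_linear0 (X : lmodType R) (F : A -> X) : vec_linear F -> F 0 = 0.
Proof.
move=> F_lin; have := F_lin 1 0 0; rewrite scale1v !scale1r addr0 => F00.
by apply: (@addrI _ (F 0)); rewrite addr0 -F00.
Qed.

Lemma ffun_basis_expand (x : A) : x = \sum_m scalev (x m) (e m).
Proof.
apply/ffunP => k; rewrite sum_ffunE (bigD1 k) //= big1 => [|m /negbTE km].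
  by rewrite !ffunE eqxx mulr1 addr0.
by rewrite !ffunE eq_sym km mulr0.
Qed.

Lemma vec_linear_expand (X : lmodType R) (F : A -> X) : vec_linear F ->
  forall x, F x = \sum_m x m *: F (e m).
Proof.
move=> F_lin x; rewrite {1}(ffun_basis_expand x).
apply: (big_rec2 (fun s1 s2 => F s1 = s2)); first exact: vec_linear0.
by move=> m y1 y2 _ <-; rewrite F_lin.
Qed.

Lemma vec_bilinear_expand (X : lmodType R) (H : A -> A -> X) :
  (forall y, vec_linear (H ^~ y)) -> (forall x, vec_linear (H x)) ->
  forall x y : A, \sum_m \sum_n (x m * y n) *: H (e m) (e n) = H x y.
Proof.
move=> H_linl H_linr x y; rewrite (vec_linear_expand (H_linl y)); apply: eq_bigr => m _.
rewrite (vec_linear_expand (H_linr (e m))) scaler_sumr; apply: eq_bigr => n _.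
by rewrite scalerA.
Qed.

End CoordinateLinearity.

Section EnvelopingAlgebra.
Variables (R : comNzRingType) (I : finType) (c : I -> I -> I -> R).
Local Notation A := {ffun I -> R}.
Local Notation G := {ffun (I * I)%type -> R}.
Local Notation e := (basisv R).
Local Notation M := (mulc c).

(* [env_eval g h] evaluates [g = \sum g(i,j) e_i (x) e_j] on the bilinear map
   with values [h i j] on basis pairs. *)
Definition env_eval (X : lmodType R) (g : G) (h : I -> I -> X) : X :=
  \sum_(p : I * I) g p *: h p.1 p.2.

Lemma env_evalD (X : lmodType R) a (g g' : G) (h : I -> I -> X) :
  env_eval (scalev a g + g') h = a *: env_eval g h + env_eval g' h.
Proof.
rewrite /env_eval scaler_sumr -big_split; apply: eq_bigr => p _.
by rewrite !ffunE scalerDl scalerA.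
Qed.

Lemma mulc_basis i k : M (e i) (e k) = [ffun m => c i k m].
Proof.
apply/ffunP => m; rewrite !ffunE (bigD1 i) //= [X in _ + X]big1 => [|i' /negbTE i'i].
  rewrite addr0 (bigD1 k) //= [X in _ + X]big1 => [|k' /negbTE k'k].
    by rewrite !ffunE !eqxx !mul1r !addr0.
  by rewrite !ffunE k'k mulr0 mul0r.
by apply: big1 => k' _; rewrite !ffunE i'i !mul0r.
Qed.

Lemma env_eval_mulc (X : lmodType R) (g g' : G) (h : I -> I -> X) :
  env_eval (mulc (env_sc c) g g') h =
  \sum_(p : I * I) \sum_(q : I * I) (g p * g' q) *:
     (\sum_m \sum_n (c p.1 q.1 m * c q.2 p.2 n) *: h m n).
Proof.
rewrite /env_eval.
under eq_bigr => mn _ do rewrite ffunE scaler_suml; rewrite exchange_big /=.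
apply: eq_bigr => p _.
under eq_bigr => mn _ do rewrite scaler_suml; rewrite exchange_big /=.
apply: eq_bigr => q _; rewrite scaler_sumr.
under [RHS]eq_bigr => m _ do rewrite scaler_sumr.
by rewrite [RHS]pair_bigA /=; apply: eq_bigr => mn _; rewrite scalerA.
Qed.

Lemma env_eval_mulc_bilinear (X : lmodType R) (H : A -> A -> X) (g g' : G) :
  (forall y, vec_linear (H ^~ y)) -> (forall x, vec_linear (H x)) ->
  env_eval (mulc (env_sc c) g g') (fun m n => H (e m) (e n)) =
  \sum_(p : I * I) \sum_(q : I * I) (g p * g' q) *:
     H (M (e p.1) (e q.1)) (M (e q.2) (e p.2)).
Proof.
move=> H_linl H_linr; rewrite env_eval_mulc; apply: eq_bigr => p _; apply: eq_bigr => q _.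
rewrite -vec_bilinear_expand // !mulc_basis; congr (_ *: _).
by apply: eq_bigr => m _; apply: eq_bigr => n _; rewrite !ffunE.
Qed.

Lemma env_eval_tensor (X : lmodType R) (H : A -> A -> X) (x y : A) :
  (forall y, vec_linear (H ^~ y)) -> (forall x, vec_linear (H x)) ->
  env_eval [ffun p => x p.1 * y p.2] (fun m n => H (e m) (e n)) = H x y.
Proof.
move=> H_linl H_linr; rewrite -vec_bilinear_expand // pair_bigA /env_eval.
by apply: eq_bigr => p _; rewrite ffunE.
Qed.

End EnvelopingAlgebra.

Section BimoduleAsEnvModule.
Variables (R : comNzRingType) (I : finType) (c : I -> I -> I -> R) (u : {ffun I -> R}).
Local Notation A := {ffun I -> R}.
Local Notation G := {ffun (I * I)%type -> R}.
Local Notation e := (basisv R).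
Local Notation M := (mulc c).
Variables (X : lmodType R) (P Q : A -> X -> X).
Hypothesis bimod_PQ : is_bimod c u P Q.

Lemma lact_linl y : vec_linear (P ^~ y).
Proof. by case: bimod_PQ => lin _ a x z; apply: lin. Qed.
Lemma lact_linr x : lmod_linear (P x).
Proof. by case: bimod_PQ => _ [lin _] a t s; apply: lin. Qed.
Lemma ract_linl y : vec_linear (Q ^~ y).
Proof. by case: bimod_PQ => _ [_ [lin _]] a x z; apply: lin. Qed.
Lemma ract_linr x : lmod_linear (Q x).
Proof. by case: bimod_PQ => _ [_ [_ [lin _]]] a t s; apply: lin. Qed.
Lemma lactM x y t : P (M x y) t = P x (P y t).
Proof. by case: bimod_PQ => _ [_ [_ [_ [mulP _]]]]. Qed.
Lemma lact1 t : P u t = t.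
Proof. by case: bimod_PQ => _ [_ [_ [_ [_ [oneP _]]]]]. Qed.
Lemma ractM x y t : Q (M x y) t = Q y (Q x t).
Proof. by case: bimod_PQ => _ [_ [_ [_ [_ [_ [mulQ _]]]]]]. Qed.
Lemma ract1 t : Q u t = t.
Proof. by case: bimod_PQ => _ [_ [_ [_ [_ [_ [_ [oneQ _]]]]]]]. Qed.
Lemma lact_ractC x y t : P x (Q y t) = Q y (P x t).
Proof. by case: bimod_PQ => _ [_ [_ [_ [_ [_ [_ [_ PQ]]]]]]]. Qed.

Lemma lact_ract_linr t x : vec_linear (fun y => P x (Q y t)).
Proof. by move=> a y z; rewrite ract_linl lact_linr. Qed.

Lemma lact_ract_lin x y : lmod_linear (fun t => P x (Q y t)).
Proof. by move=> a t s; rewrite ract_linr lact_linr. Qed.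

(* Lambda^e acts on a Lambda-bimodule by (x (x) y) . t = x t y. *)
Definition env_act (g : G) (t : X) : X := env_eval g (fun i j => P (e i) (Q (e j) t)).

Lemma env_actDl a g g' t : env_act (scalev a g + g') t = a *: env_act g t + env_act g' t.
Proof. exact: env_evalD. Qed.

Lemma env_act_lin g : lmod_linear (env_act g).
Proof.
move=> a t s; rewrite /env_act /env_eval scaler_sumr -big_split; apply: eq_bigr => p _ /=.
by rewrite lact_ract_lin scalerDr !scalerA mulrC.
Qed.

Lemma env_act_tensor (x y : A) t : env_act [ffun p => x p.1 * y p.2] t = P x (Q y t).
Proof.
rewrite /env_act (@env_eval_tensor _ _ _ (fun x y => P x (Q y t))) //.
- by move=> y'; apply: lact_linl.
- exact: lact_ract_linr.
Qed.

Lemma env_act1 t : env_act (env_unit u) t = t.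
Proof. by rewrite /env_unit env_act_tensor ract1 lact1. Qed.

Lemma env_actM g g' t : env_act (mulc (env_sc c) g g') t = env_act g (env_act g' t).
Proof.
rewrite /env_act (@env_eval_mulc_bilinear _ _ _ _ (fun x y => P x (Q y t))); last first.
- exact: lact_ract_linr.
- by move=> y; apply: lact_linl.
rewrite {1}/env_eval; apply: eq_bigr => p _.
rewrite (lmod_linear_sum (lact_ract_lin _ _)) scaler_sumr; apply: eq_bigr => q _.
by rewrite scalerA lactM ractM (lact_ractC (e q.1)).
Qed.

End BimoduleAsEnvModule.

Definition alg_hom (R : comNzRingType) (I : finType) (c : I -> I -> I -> R)
  (u : {ffun I -> R}) (f : {ffun I -> R} -> {ffun I -> R}) : Prop :=
  (forall a x y, f (scalev a x + y) = scalev a (f x) + f y) /\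
  (forall x y, f (mulc c x y) = mulc c (f x) (f y)) /\ f u = u.

Section TwistedBimodule.
Variables (R : comNzRingType) (I : finType) (c : I -> I -> I -> R) (u : {ffun I -> R}).
Local Notation A := {ffun I -> R}.
Local Notation M := (mulc c).
Hypothesis assoc_cu : is_assoc_alg c u.

Lemma alg_hom_id : alg_hom c u id.
Proof. by []. Qed.

Lemma aut_alg_hom f : is_aut c u f -> alg_hom c u f.
Proof. by case=> f_lin [fM [f1 _]]. Qed.

(* [R^o] makes coordinate vectors an [lmodType R], so that Lambda with
   x . t . y = alpha(x) t gamma(y) fits [is_bimod]. *)
Definition twist_lact (alpha : A -> A) (x : A) (t : {ffun I -> R^o}) : {ffun I -> R^o} :=
  M (alpha x) t.
Definition twist_ract (gamma : A -> A) (y : A) (t : {ffun I -> R^o}) : {ffun I -> R^o} :=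
  M t (gamma y).

Lemma twisted_bimod alpha gamma : alg_hom c u alpha -> alg_hom c u gamma ->
  is_bimod c u (twist_lact alpha) (twist_ract gamma).
Proof.
move: assoc_cu => [mulcA [mul1c mulc1]] [alpha_lin [alphaM alpha1]] [gamma_lin [gammaM gamma1]].
rewrite /twist_lact /twist_ract.
split; [|split; [|split; [|split; [|split; [|split; [|split; [|split]]]]]]] => *.
- by rewrite alpha_lin mulc_linl.
- exact: mulc_linr.
- by rewrite gamma_lin mulc_linr.
- exact: mulc_linl.
- by rewrite alphaM mulcA.
- by rewrite alpha1 mul1c.
- by rewrite gammaM mulcA.
- by rewrite gamma1 mulc1.
- by rewrite mulcA.
Qed.

End TwistedBimodule.

Section HomBimodule.
Variables (R : comNzRingType) (I : finType) (c : I -> I -> I -> R) (u : {ffun I -> R}).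
Local Notation A := {ffun I -> R}.
Local Notation G := {ffun (I * I)%type -> R}.
Local Notation e := (basisv R).
Local Notation M := (mulc c).
Hypothesis assoc_cu : is_assoc_alg c u.
Variables (X : lmodType R) (P Q : A -> X -> X).
Hypothesis bimod_PQ : is_bimod c u P Q.

Local Notation reg_bimod := (twisted_bimod assoc_cu (alg_hom_id c u) (alg_hom_id c u)).
Local Notation reg_act := (env_act (twist_lact c id) (twist_ract c id)).

(* [F : {ffun I -> X}] stands for the R-linear map Lambda -> X sending e_k to F k. *)
Definition hom_app (F : {ffun I -> X}) (z : A) : X := \sum_m z m *: F m.

(* Hom(Lambda, X) is a Lambda^e-bimodule: g acts on the left through the
   target X and on the right through the source Lambda. *)
Definition hom_lact (g : G) (F : {ffun I -> X}) : {ffun I -> X} :=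
  [ffun k => env_act P Q g (F k)].
Definition hom_ract (g : G) (F : {ffun I -> X}) : {ffun I -> X} :=
  [ffun k => hom_app F (reg_act g (e k))].

Lemma hom_app_linl z : lmod_linear (fun F : {ffun I -> X} => hom_app F z).
Proof.
move=> a F F'; rewrite /hom_app scaler_sumr -big_split; apply: eq_bigr => m _.
by rewrite !ffunE scalerDr !scalerA mulrC.
Qed.

Lemma hom_app_linr F : vec_linear (hom_app F).
Proof.
move=> a z z'; rewrite /hom_app scaler_sumr -big_split; apply: eq_bigr => m _.
by rewrite !ffunE scalerDl scalerA.
Qed.

Lemma hom_app_basis F k : hom_app F (e k) = F k.
Proof.
rewrite /hom_app (bigD1 k) //= big1 => [|m /negbTE mk].
  by rewrite !ffunE eqxx scale1r addr0.
by rewrite !ffunE mk scale0r.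
Qed.

Lemma hom_appZ a F z : hom_app (a *: F) z = a *: hom_app F z.
Proof.
rewrite /hom_app scaler_sumr; apply: eq_bigr => m _.
by rewrite !ffunE !scalerA mulrC.
Qed.

Lemma hom_appB F F' z : hom_app (F - F') z = hom_app F z - hom_app F' z.
Proof. by rewrite /hom_app -sumrB; apply: eq_bigr => m _; rewrite !ffunE scalerBr. Qed.

Lemma hom_app_comp (L : X -> X) F z :
  lmod_linear L -> L (hom_app F z) = hom_app [ffun m => L (F m)] z.
Proof.
by move=> L_lin; rewrite /hom_app (lmod_linear_sum L_lin); apply: eq_bigr => m _; rewrite ffunE.
Qed.

Lemma hom_app_ract g F z : hom_app (hom_ract g F) z = hom_app F (reg_act g z).
Proof.
have lin : vec_linear (fun z => hom_app F (reg_act g z)).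
  by move=> a x y; rewrite (env_act_lin reg_bimod); apply: hom_app_linr.
by rewrite (vec_linear_expand lin z); apply: eq_bigr => m _; rewrite ffunE.
Qed.

Lemma hom_bimod : is_bimod (env_sc c) (env_unit u) hom_lact hom_ract.
Proof.
split; [|split; [|split; [|split; [|split; [|split; [|split; [|split]]]]]]].
- by move=> a g g' F; apply/ffunP => k; rewrite !ffunE env_actDl.
- by move=> a g F F'; apply/ffunP => k; rewrite !ffunE (env_act_lin bimod_PQ).
- by move=> a g g' F; apply/ffunP => k; rewrite !ffunE env_actDl hom_app_linr.
- by move=> a g F F'; apply/ffunP => k; rewrite !ffunE hom_app_linl.
- by move=> g g' F; apply/ffunP => k; rewrite !ffunE (env_actM bimod_PQ).
- by move=> F; apply/ffunP => k; rewrite !ffunE (env_act1 bimod_PQ).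
- by move=> g g' F; apply/ffunP => k; rewrite !ffunE hom_app_ract (env_actM reg_bimod).
- by move=> F; apply/ffunP => k; rewrite !ffunE (env_act1 reg_bimod) hom_app_basis.
- move=> g g' F; apply/ffunP => k; rewrite !ffunE (hom_app_comp _ _ (env_act_lin bimod_PQ g)).
  by congr hom_app; apply/ffunP => m; rewrite !ffunE.
Qed.

Variable D : A -> X.
Hypothesis der_D : is_der c P Q D.

Lemma der_linear : vec_linear D.
Proof. by case: der_D => lin _ a x y; apply: lin. Qed.

Lemma derM x y : D (M x y) = P x (D y) + Q y (D x).
Proof. by case: der_D. Qed.

Lemma der1 : D u = 0.
Proof.
case: assoc_cu => [_ [mul1c _]].
have := derM u u; rewrite mul1c (lact1 bimod_PQ) (ract1 bimod_PQ) => D11.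
by apply: (@addrI _ (D u)); rewrite addr0 -D11.
Qed.

(* The derivation x (x) y |-> (z |-> D(x) z y) of Lambda^e into Hom(Lambda, X). *)
Definition hom_der (g : G) : {ffun I -> X} :=
  [ffun k => env_eval g (fun i j => Q (e j) (Q (e k) (D (e i))))].

Lemma ract_lmod_linl t : lmod_linear (fun z : {ffun I -> R^o} => Q z t).
Proof. by move=> a x y; apply: (ract_linl bimod_PQ). Qed.

Lemma hom_app_der g z :
  hom_app (hom_der g) z = env_eval g (fun i j => Q (e j) (Q z (D (e i)))).
Proof.
rewrite /hom_app /env_eval.
under eq_bigr => m _ do rewrite ffunE /env_eval scaler_sumr.
rewrite exchange_big /=; apply: eq_bigr => p _.
have lin : vec_linear (fun z => Q (e p.2) (Q z (D (e p.1)))).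
  by move=> a x y; rewrite (ract_linl bimod_PQ) (ract_linr bimod_PQ).
rewrite (vec_linear_expand lin z) scaler_sumr; apply: eq_bigr => m _.
by rewrite !scalerA mulrC.
Qed.

Lemma hom_der_is_der : is_der (env_sc c) hom_lact hom_ract hom_der.
Proof.
split; first by move=> a g g'; apply/ffunP => k; rewrite !ffunE env_evalD.
move=> g g'; apply/ffunP => k; rewrite !ffunE hom_app_der.
rewrite (@env_eval_mulc_bilinear _ _ c _ (fun x y => Q y (Q (e k) (D x)))); last first.
- by move=> x a y y'; rewrite (ract_linl bimod_PQ).
- by move=> y a x x'; rewrite der_linear !(ract_linr bimod_PQ).
rewrite /env_act {1 2}/env_eval -big_split; apply: eq_bigr => p _ /=.
rewrite (lmod_linear_sum (lact_ract_lin bimod_PQ _ _)) /env_eval.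
rewrite (lmod_linear_sum (ract_lmod_linl _)) (lmod_linear_sum (ract_linr bimod_PQ _)).
rewrite !scaler_sumr -big_split; apply: eq_bigr => q _ /=.
rewrite !scalerA -scalerDr; congr (_ *: _).
rewrite /twist_lact /twist_ract !(ractM bimod_PQ) derM.
rewrite !(lmod_linearD (ract_linr bimod_PQ _)).
by rewrite -!(lact_ractC bimod_PQ).
Qed.

End HomBimodule.

(* Make [hom_der] inner, then evaluate at 1 on x (x) 1 and on 1 (x) y. *)
Lemma env_annH1_inner (R : comNzRingType) (I : finType) (c : I -> I -> I -> R)
    (u : {ffun I -> R}) (a : R) :
  is_assoc_alg c u -> annH1 (env_sc c) (env_unit u) a ->
  forall (X : lmodType R) (P Q : {ffun I -> R} -> X -> X) (D : {ffun I -> R} -> X),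
  is_bimod c u P Q -> is_der c P Q D ->
  exists t, forall y, a *: D y = P y t - Q y t.
Proof.
move=> assoc_cu ann X P Q D bimod_PQ der_D.
have reg_bimod := twisted_bimod assoc_cu (alg_hom_id c u) (alg_hom_id c u).
have [F inner] :=
  ann _ _ _ (hom_bimod assoc_cu bimod_PQ) _ (hom_der_is_der bimod_PQ der_D).
exists (hom_app F u) => y.
have lact_u g : hom_app (hom_lact P Q g F) u = env_act P Q g (hom_app F u).
  by rewrite (hom_app_comp _ _ (env_act_lin bimod_PQ g)).
have := congr1 (fun G => hom_app G u) (inner [ffun p => y p.1 * u p.2]).
have := congr1 (fun G => hom_app G u) (inner [ffun p => u p.1 * y p.2]).
rewrite /= !hom_appZ !hom_appB !(hom_app_ract assoc_cu) !lact_u !(env_act_tensor bimod_PQ).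
rewrite !(hom_app_der bimod_PQ) !(env_act_tensor reg_bimod).
have QD_linl z : vec_linear (fun x => Q z (Q u (D x))).
  by move=> a' x1 x2; rewrite (der_linear der_D) !(ract_linr bimod_PQ).
have QD_linr x : vec_linear (fun z => Q z (Q u (D x))).
  by move=> a' y1 y2; rewrite (ract_linl bimod_PQ).
rewrite !(@env_eval_tensor _ _ _ (fun x z => Q z (Q u (D x)))) //.
case: (assoc_cu) => [_ [mul1c mulc1]].
rewrite /twist_lact /twist_ract !mul1c !mulc1 !(ract1 bimod_PQ) (lact1 bimod_PQ).
rewrite (der1 assoc_cu bimod_PQ der_D) (lmod_linear0 (ract_linr bimod_PQ _)) scaler0.
by move/eqP; rewrite eq_sym subr_eq0 => /eqP <-.
Qed.

Section Conjugation.
Variables (R : comNzRingType) (I : finType) (c : I -> I -> I -> R) (u : {ffun I -> R}).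
Local Notation A := {ffun I -> R}.
Local Notation M := (mulc c).
Hypothesis assoc_cu : is_assoc_alg c u.

Lemma left_right_inverse_eq (w a b : A) : M b w = u -> M w a = u -> a = b.
Proof.
by case: assoc_cu => [mulcA [mul1c mulc1]] bw wa; rewrite -[a]mul1c -bw mulcA wa mulc1.
Qed.

Lemma alg_hom_conj (beta : A -> A) (w wi : A) :
  alg_hom c u beta -> M w wi = u -> M wi w = u ->
  alg_hom c u (fun x => beta (M (M w x) wi)).
Proof.
case: assoc_cu => [mulcA [mul1c mulc1]] [beta_lin [betaM beta1]] wwi wiw.
split; [|split] => [a x y|x y|]; first by rewrite mulc_linr mulc_linl beta_lin.
  by rewrite -betaM !mulcA -[M wi (M w _)]mulcA wiw mul1c.
by rewrite mulc1 wwi.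
Qed.

Lemma congr_mod_lin (f : A -> A) q x y :
  (forall a x y, f (scalev a x + y) = scalev a (f x) + f y) ->
  congr_mod q x y -> congr_mod q (f x) (f y).
Proof.
move=> f_lin [z /eqP]; rewrite subr_eq => /eqP ->.
by exists (f z); rewrite f_lin addrK.
Qed.

Lemma alg_hom_pullback_inverse (beta : A -> A) (v vi : A) :
  alg_hom c u beta -> bijective beta -> M v vi = u -> M vi v = u ->
  exists y yi, [/\ M y yi = u, M yi y = u, beta y = v & beta yi = vi].
Proof.
move=> [_ [betaM beta1]] [beta_inv betaK betaKV] vvi viv.
have beta_inj := can_inj betaK.
exists (beta_inv v), (beta_inv vi); split; rewrite ?betaKV //.
  by apply: beta_inj; rewrite betaM !betaKV vvi beta1.
by apply: beta_inj; rewrite betaM !betaKV viv beta1.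
Qed.

End Conjugation.

Section DifferenceDerivation.
Variables (O : idomainType) (I : finType) (c : I -> I -> I -> O) (u : {ffun I -> O}).
Local Notation A := {ffun I -> O}.
Local Notation M := (mulc c).
Hypothesis assoc_cu : is_assoc_alg c u.
Variables (alpha gamma : A -> A).
Hypotheses (alpha_hom : alg_hom c u alpha) (gamma_hom : alg_hom c u gamma).

Lemma scalev_inj (q : O) : q != 0 -> injective (@scalev O I q).
Proof. by move=> q0 x y /ffunP xy; apply/ffunP => k; have := xy k; rewrite !ffunE => /mulfI->. Qed.

Lemma difference_quotient_der (q : O) (D : A -> A) : q != 0 ->
  (forall x, alpha x - gamma x = scalev q (D x)) ->
  is_der c (twist_lact c alpha) (twist_ract c gamma) D.
Proof.
case: alpha_hom gamma_hom => [alpha_lin [alphaM _]] [gamma_lin [gammaM _]] q0 D_eq.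
split=> [a x y|x y]; apply: (scalev_inj q0).
  by rewrite scalevDr scalevA mulrC -scalevA -!D_eq alpha_lin gamma_lin opprD addrACA scalevBr.
rewrite /twist_lact /twist_ract scalevDr -mulcZr -mulcZl -!D_eq alphaM gammaM.
by rewrite mulcBr mulcBl addrA subrK.
Qed.

Lemma intertwiner_of_inner (q r : O) (D : A -> A) (t : A) :
  (forall y, alpha y - gamma y = scalev (q * r) (D y)) ->
  (forall y, scalev r (D y) = M (alpha y) t - M t (gamma y)) ->
  forall y, M (alpha y) (u - scalev q t) = M (u - scalev q t) (gamma y).
Proof.
case: assoc_cu => [_ [mul1c mulc1]] D_eq inner y.
have E : alpha y - gamma y = scalev q (M (alpha y) t) - scalev q (M t (gamma y)).
  by rewrite D_eq -scalevA inner scalevBr.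
rewrite mulcBr mulcBl mulc1 mul1c mulcZr mulcZl.
by apply/eqP; rewrite subr_eq addrAC -addrA -E addrC subrK.
Qed.

End DifferenceDerivation.

Section PiAdicConjugacy.
Variables (O : idomainType) (pi : O) (I : finType) (c : I -> I -> I -> O) (u : {ffun I -> O}).
Hypotheses (dvr_pi : is_dvr_unif pi) (complete_pi : pi_complete pi).
Hypothesis assoc_cu : is_assoc_alg c u.
Local Notation A := {ffun I -> O}.
Local Notation M := (mulc c).

Lemma congr_alg_homs_conj (dd s : nat) (alpha gamma : A -> A) :
  annH1 (env_sc c) (env_unit u) (pi ^+ dd) -> (dd < s)%N ->
  alg_hom c u alpha -> alg_hom c u gamma ->
  (forall x, congr_mod (pi ^+ s) (alpha x) (gamma x)) ->
  exists v vi, [/\ M v vi = u, M vi v = u & forall x, alpha x = M (M v (gamma x)) vi].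
Proof.
move=> ann dd_lt_s alpha_hom gamma_hom alpha_gamma.
have [D D_eq] := congr_mod_quotient alpha_gamma.
have pis0 : pi ^+ s != 0 by rewrite expf_neq0 //; case: dvr_pi.
have D_der := difference_quotient_der alpha_hom gamma_hom pis0 D_eq.
have [t inner] :=
  env_annH1_inner assoc_cu ann (twisted_bimod assoc_cu alpha_hom gamma_hom) D_der.
have s_split : pi ^+ s = pi ^+ (s - dd) * pi ^+ dd by rewrite -exprD subnK // ltnW.
rewrite s_split in D_eq.
pose v := u - scalev (pi ^+ (s - dd)) t.
have intertwines := intertwiner_of_inner assoc_cu D_eq inner.
have [|vi [vvi viv]] := invertible_congr_unit dvr_pi complete_pi assoc_cu (x := v).
  have : dvdv (pi ^+ (s - dd)) (v - u).
    by exists (scalev (-1) t); rewrite addrAC subrr add0r -scaleNv !scalevA mulrC.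
  have sdd_gt0 : (0 < s - dd)%N by rewrite subn_gt0.
  by move=> /(dvdv_exp_leq sdd_gt0); rewrite expr1.
exists v, vi; split=> // x.
by case: assoc_cu => [mulcA [_ mulc1]]; rewrite -intertwines mulcA vvi mulc1.
Qed.

Lemma invertible_congr_mod (s : nat) (w w' : A) : (0 < s)%N ->
  congr_mod (pi ^+ s) (M w w') u -> congr_mod (pi ^+ s) (M w' w) u ->
  exists wi, [/\ M w wi = u, M wi w = u & congr_mod (pi ^+ s) w' wi].
Proof.
move=> s_gt0 ww' w'w; case: (assoc_cu) => [mulcA [mul1c mulc1]].
have mod_pi x : congr_mod (pi ^+ s) x u -> congr_mod pi x u.
  by move=> /(dvdv_exp_leq s_gt0); rewrite expr1.
have [a [ww'a _]] := invertible_congr_unit dvr_pi complete_pi assoc_cu (mod_pi _ ww').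
have [b [_ bw'w]] := invertible_congr_unit dvr_pi complete_pi assoc_cu (mod_pi _ w'w).
rewrite mulcA in ww'a; rewrite -mulcA in bw'w.
have wiw : M (M w' a) w = u by rewrite (left_right_inverse_eq assoc_cu bw'w ww'a).
exists (M w' a); split=> //; rewrite congr_modE.
have -> : w' - M w' a = M (M w' a) (M w w' - u) by rewrite mulcBr -mulcA wiw mul1c mulc1.
exact: dvdv_mulcl.
Qed.

End PiAdicConjugacy.

Theorem lemma3p3
  (O : idomainType) (K : fieldType) (iota : {rmorphism O -> K}) (pi : O) (p : nat)
  (Hdvr : is_dvr_unif pi) (Hchar0 : char_zero O) (Hres : residue_char pi p)
  (Hcomplete : pi_complete pi) (HK : is_frac_field iota)
  (I : finType) (c : I -> I -> I -> O) (u : {ffun I -> O})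
  (Hord : is_order_sep iota c u)
  (dd : nat) (Hdepth : depth_is pi (env_sc c) (env_unit u) dd)
  (s : nat) (Hs : (dd + 1 <= s)%N) :
  forall alpha beta : {ffun I -> O} -> {ffun I -> O},
    is_aut c u alpha -> is_aut c u beta ->
    (exists w w' : {ffun I -> O},
        congr_mod (pi ^+ s) (mulc c w w') u /\ congr_mod (pi ^+ s) (mulc c w' w) u /\
        forall x, congr_mod (pi ^+ s) (alpha x) (beta (mulc c (mulc c w x) w'))) ->
    exists v v' : {ffun I -> O},
      mulc c v v' = u /\ mulc c v' v = u /\
      forall x, alpha x = beta (mulc c (mulc c v x) v').
Proof.
move=> alpha beta alpha_aut beta_aut [w [w' [ww' [w'w alpha_beta]]]].
have assoc_cu := Hord.1.
have alpha_hom := aut_alg_hom alpha_aut.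
have beta_hom := aut_alg_hom beta_aut.
have dd_lt_s : (dd < s)%N by rewrite -addn1.
have ann : annH1 (env_sc c) (env_unit u) (pi ^+ dd) by apply/Hdepth; exists 1; rewrite mulr1.
have s_gt0 : (0 < s)%N := leq_ltn_trans (leq0n dd) dd_lt_s.
have [wi [wwi wiw w'_wi]] := invertible_congr_mod Hdvr Hcomplete assoc_cu s_gt0 ww' w'w.
pose gamma x := beta (mulc c (mulc c w x) wi).
have gamma_hom : alg_hom c u gamma := alg_hom_conj assoc_cu beta_hom wwi wiw.
have alpha_gamma x : congr_mod (pi ^+ s) (alpha x) (gamma x).
  apply: congr_mod_trans (alpha_beta x) _; apply: congr_mod_lin beta_hom.1 _.
  by rewrite congr_modE -mulcBr; apply: dvdv_mulcl.
have [v [vi [vvi viv alpha_conj]]] :=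
  congr_alg_homs_conj Hdvr Hcomplete assoc_cu ann dd_lt_s alpha_hom gamma_hom alpha_gamma.
have [y [yi [yyi yiy yv yiv]]] :=
  alg_hom_pullback_inverse beta_hom beta_aut.2.2.2 vvi viv.
case: assoc_cu => [mulcA [mul1c _]].
exists (mulc c y w), (mulc c wi yi); split; [|split] => [||x].
- by rewrite mulcA -[mulc c w _]mulcA wwi mul1c.
- by rewrite mulcA -[mulc c yi _]mulcA yiy mul1c.
- by rewrite alpha_conj -yv -yiv /gamma -!beta_hom.2.1 !mulcA.
Qed.
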